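(* Let $X$ be a Hausdorff locally convex space, let $T:X\rightrightarrows X^{*}$, and let $V\subset X$ be non-empty, algebraically open (i.e. $V=\operatorname{core}V$) and convex, such that $T|_{V}$ is a non-void monotone operator and $T$ is $V$-NI. Then \[ [\psi_{T|_{V}}=c]\cap (V\times X^{*})=[\varphi_{T|_{V}}=c]\cap (V\times X^{*})=[\varphi_{T|_{V}}\le c]\cap (V\times X^{*}), \] and this set is the unique $V$-representable extension and the unique maximal monotone extension in $V\times X^{*}$ of $T|_{V}$. If, in addition, $T$ is a non-void monotone operator, then moreover \[ [\psi_{T|_{V}}=c]\cap (V\times X^{*})=[\varphi_{T}=c]\cap (V\times X^{*})=[\psi_{T}=c]\cap (V\times X^{*}). \] If, in addition, $T$ is a non-void monotone operator and $T$ is $V$-representable, then $V$ identifies $T$ and \[ [\psi_{T|_{V}}=c]\cap (V\times X^{*})=[\varphi_{T|_{V}}=c]\cap (V\times X^{*})=[\varphi_{T|_{V}}\le c]\cap (V\times X^{*})=[\varphi_{T}=c]\cap (V\times X^{*})=[\psi_{T}=c]\cap (V\times X^{*})=\operatorname{Graph}(T|_{V}). \]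
   Context: $X$ is a non-trivial Hausdorff locally convex space with topology $\tau$, $X^{*}$ its dual with the weak-star topology $w^{*}$, $Z=X\times X^{*}$, and $c(x,x^{*})=\langle x,x^{*}\rangle$ is the duality coupling. For $T\subset X\times X^{*}$ and $V\subset X$, $T|_{V}$ is the operator with $\operatorname{Graph}T|_{V}=\operatorname{Graph}T\cap(V\times X^{*})$. The Fitzpatrick function is $\varphi_{T}(x,x^{*})=\sup\{\langle x,u^{*}\rangle+\langle u,x^{*}\rangle-\langle u,u^{*}\rangle\mid (u,u^{*})\in T\}$, and $\psi_{T}$ is the $\tau\times w^{*}$-lower semicontinuous convex hull of $c+\iota_{\operatorname{Graph}T}$. For functions $f,g$, $[f\le g]=\{z\mid f(z)\le g(z)\}$, similarly $[f=g]$. $T$ is $V$-NI if $\varphi_{T|_{V}}\ge c$ on $V\times X^{*}$. $T$ is $V$-representable if $V\cap D(T)\ne\emptyset$ and there is a proper convex $\tau\times w^{*}$-lsc $h\ge c$ on $Z$ with $[h=c]\cap(V\times X^{*})=\operatorname{Graph}(T|_{V})$. $V$ identifies $T$ if every $(x,x^{*})\in V\times X^{*}$ with $\varphi_{T|_{V}}(x,x^{*})\le \langle x,x^{*}\rangle$ (i.e. monotonically related to $T|_V$) belongs to $\operatorname{Graph}T$. *)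

From HB Require Import structures.
From mathcomp Require Import all_boot all_order all_algebra.
From mathcomp Require Import all_classical all_reals all_analysis.

Set Implicit Arguments.
Unset Strict Implicit.
Unset Printing Implicit Defensive.

Import Order.TTheory GRing.Theory Num.Theory numFieldTopology.Exports.

Local Open Scope classical_set_scope.
Local Open Scope ring_scope.

Section Fitzpatrick.
Context {R : realType} {X : tvsType R}.

(* The topological dual X^* : continuous linear functionals X -> R.
   Elements of X^* are represented by the underlying functions. *)
Definition dual_space : set (X -> R) :=
  [set f | (forall (a : R) (x y : X), f (a *: x + y) = a * f x + f y)
           /\ (forall x0 : X, f y @[y --> x0] --> f x0)].

Definition Zsp : set (X * (X -> R)) := [set z | dual_space z.2].

(* duality coupling c(x, x^* ) = <x, x^*> *)
Definition coupling (z : X * (X -> R)) : R := z.2 z.1.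

(* Operators T : X ==> X^* are given by their graphs, T `<=` Zsp. *)
Definition restr_op (T : set (X * (X -> R))) (V : set X) : set (X * (X -> R)) :=
  T `&` [set z | V z.1].

Definition dom_op (T : set (X * (X -> R))) : set X :=
  [set x | exists xs, T (x, xs)].

Definition nonvoid_op (T : set (X * (X -> R))) : Prop := T !=set0.

Definition mon_related (z w : X * (X -> R)) : Prop :=
  0 <= z.2 (z.1 - w.1) - w.2 (z.1 - w.1).

Definition monotone_op (T : set (X * (X -> R))) : Prop :=
  forall z w, T z -> T w -> mon_related z w.

Definition maximal_monotone_in (V : set X) (S : set (X * (X -> R))) : Prop :=
  S `<=` Zsp /\ S `<=` [set z | V z.1] /\ monotone_op S /\
  forall z, Zsp z -> V z.1 -> (forall w, S w -> mon_related z w) -> S z.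

Definition fitzpatrick (T : set (X * (X -> R))) (z : X * (X -> R)) : \bar R :=
  ereal_sup [set ((u.2 z.1 + z.2 u.1 - u.2 u.1)%:E) | u in T].

Definition indic_graph (T : set (X * (X -> R))) (z : X * (X -> R)) : \bar R :=
  if `[< T z >] then 0%E else +oo%E.

Definition zcomb (l : R) (z w : X * (X -> R)) : X * (X -> R) :=
  (l *: z.1 + (1 - l) *: w.1, fun x => l * z.2 x + (1 - l) * w.2 x).

(* convexity of h : Z -> \bar R  (convex epigraph) *)
Definition convex_on_Z (h : X * (X -> R) -> \bar R) : Prop :=
  forall z w (r s l : R), Zsp z -> Zsp w -> (h z <= r%:E)%E -> (h w <= s%:E)%E ->
    0 <= l <= 1 -> (h (zcomb l z w) <= (l * r + (1 - l) * s)%:E)%E.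

(* (relative) openness in Z for the product topology tau x w^* *)
Definition tw_open (U : set (X * (X -> R))) : Prop :=
  forall z, Zsp z -> U z ->
    exists N : set X, nbhs z.1 N /\
    exists (F : seq X) (e : R), 0 < e /\
      forall x ys, N x -> dual_space ys ->
        (forall u, u \in F -> `|ys u - z.2 u| < e) -> U (x, ys).

Definition tw_lsc (h : X * (X -> R) -> \bar R) : Prop :=
  forall a : R, tw_open [set z | (a%:E < h z)%E].

Definition proper_on_Z (h : X * (X -> R) -> \bar R) : Prop :=
  (forall z, Zsp z -> h z != -oo%E) /\ exists z, Zsp z /\ (h z < +oo)%E.

(* psi_T : the tau x w^*-lsc convex hull of c + iota_T, i.e. the greatest
   convex tau x w^*-lsc function on Z majorized by c + iota_T. *)
Definition psi_hull (T : set (X * (X -> R))) (z : X * (X -> R)) : \bar R :=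
  ereal_sup [set h z | h in
    [set h | convex_on_Z h /\ tw_lsc h /\
             forall w, Zsp w -> (h w <= (coupling w)%:E + indic_graph T w)%E]].

Definition V_NI (V : set X) (T : set (X * (X -> R))) : Prop :=
  forall z, Zsp z -> V z.1 -> ((coupling z)%:E <= fitzpatrick (restr_op T V) z)%E.

Definition V_representable (V : set X) (T : set (X * (X -> R))) : Prop :=
  (V `&` dom_op T !=set0) /\
  exists h : X * (X -> R) -> \bar R,
    proper_on_Z h /\ convex_on_Z h /\ tw_lsc h /\
    (forall z, Zsp z -> ((coupling z)%:E <= h z)%E) /\
    (forall z, Zsp z -> V z.1 -> (h z = (coupling z)%:E <-> restr_op T V z)).

Definition identifies (V : set X) (T : set (X * (X -> R))) : Prop :=
  forall z, Zsp z -> V z.1 -> (fitzpatrick (restr_op T V) z <= (coupling z)%:E)%E -> T z.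

Definition eqc_on (V : set X) (f : X * (X -> R) -> \bar R) : set (X * (X -> R)) :=
  [set z | Zsp z /\ V z.1 /\ f z = (coupling z)%:E].
Definition lec_on (V : set X) (f : X * (X -> R) -> \bar R) : set (X * (X -> R)) :=
  [set z | Zsp z /\ V z.1 /\ (f z <= (coupling z)%:E)%E].

Definition algebraically_open (V : set X) : Prop :=
  forall x, V x -> forall y : X, exists2 d : R, 0 < d &
    forall t : R, 0 <= t <= d -> V (x + t *: y).

Definition convex_subset (V : set X) : Prop :=
  forall x y (l : R), V x -> V y -> 0 <= l <= 1 -> V (l *: x + (1 - l) *: y).

End Fitzpatrick.

From HB Require Import structures.
From mathcomp Require Import all_boot all_order all_algebra.
From mathcomp Require Import all_classical all_reals all_analysis.
From mathcomp.algebra_tactics Require Import ring lra.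

Set Implicit Arguments.
Unset Strict Implicit.
Unset Printing Implicit Defensive.

Import Order.TTheory GRing.Theory Num.Theory numFieldTopology.Exports.

Local Open Scope classical_set_scope.
Local Open Scope ring_scope.

(* Write [S = T|_V] and [M = [phi_S = c] cap V x X^*]. By NI, [M] is also
   [[phi_S <= c] cap V x X^*], and convexity of [phi_S] at midpoints (which stay in
   the convex set [V], where [c <= phi_S]) makes [M] monotone.
   The key point is [psi_S <= c] on [M]. If a convex tau x w*-lsc minorant [h] of
   [c + iota_S] had [c z < h z], Hahn-Banach would strictly separate [(z, c z)] from the
   epigraph of [h] by a tau x w*-continuous functional, producing [w] in [Z] with
   [<z, w^*> + <w, z^*> - c z > phi_S w]; moving from [z] towards [w] inside the
   algebraically open [V] then violates [c <= phi_S]. Hence [phi_S <= psi_S <= c] on [M],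
   so [M = [psi_S = c] cap V x X^*] is represented by [psi_S], and every representable
   or maximal monotone extension of [S] inside [V x X^*] is squeezed onto [M]. When [T] is
   monotone, [phi_S <= phi_T <= psi_T <= psi_S] gives the remaining equalities. *)

Section Zorn_above.
Context {T : Type}.

Lemma bigcup_chain2 (F : set (set T)) z1 z2 : total_on F subset ->
  (\bigcup_(A in F) A) z1 -> (\bigcup_(A in F) A) z2 ->
  exists2 A, F A & A z1 /\ A z2.
Proof.
move=> Ftot [A FA Az1] [B FB Bz2].
have [AB|BA] := Ftot _ _ FA FB; first by exists B => //; split => //; exact: AB.
by exists A => //; split => //; exact: BA.
Qed.

Lemma Zorn_above (Q : set (set T)) (A0 : set T) : Q A0 ->
  (forall F, F `<=` Q -> total_on F subset -> Q (\bigcup_(A in F) A)) ->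
  exists A, [/\ A0 `<=` A, Q A & forall B, A `<` B -> ~ Q B].
Proof.
move=> QA0 Qchain.
(* [set0] is allowed so that the empty chain has an upper bound. *)
pose P := [set A : set T | A = set0 \/ A0 `<=` A /\ Q A].
have [A [PA Amax]] : exists A, P A /\ forall B, A `<` B -> ~ P B.
  apply: Zorn_bigcup => F FP Ftot.
  pose F' := F `&` [set A | A0 `<=` A /\ Q A].
  have UF' : \bigcup_(A in F) A = \bigcup_(A in F') A.
    apply/seteqP; split=> z [A FA Az]; last by exists A => //; case: FA.
    exists A => //; split => //.
    by case: (FP _ FA) => // A0E; move: Az; rewrite A0E.
  have [F'0|/set0P[A1 F'A1]] := eqVneq F' set0.
    by left; rewrite UF' F'0 bigcup_set0.
  right; rewrite UF'; split.
    by move=> z A0z; exists A1 => //; case: F'A1 => _ [+ _]; apply.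
  apply: Qchain; first by move=> A [_ []].
  by move=> A B [FA _] [FB _]; exact: Ftot.
have maxQ B : A `<` B -> ~ (A0 `<=` B /\ Q B) by move=> AB PB; apply: (Amax B) => //; right.
case: PA => [A0E|[A0A QA]].
  2: exists A; split => // B AB QB; apply: (maxQ B AB); split => //.
  2: exact: subset_trans A0A (properW AB).
have [A0_0|/set0P[z A0z]] := eqVneq A0 set0.
  exists A0; split => // B; rewrite {1}A0_0 -A0E => AB QB.
  by apply: (maxQ B AB); split => //; rewrite A0_0; exact: sub0set.
exfalso; apply: (maxQ A0); last by split.
by rewrite A0E; split; [exact: sub0set|move=> /(_ z A0z)].
Qed.

End Zorn_above.

Section LinearForm.
Context {R : pzRingType} {Y : lmodType R}.
Implicit Types (f : Y -> R) (a : R) (x y : Y).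

Definition linear_form f := forall a x y, f (a *: x + y) = a * f x + f y.

Lemma linear_form0 f : linear_form f -> f 0 = 0.
Proof.
by move=> fl; have := fl 1 0 0; rewrite scale1r addr0 mul1r -{1}[f 0]addr0 => /addrI.
Qed.

Lemma linear_formD f x y : linear_form f -> f (x + y) = f x + f y.
Proof. by move=> fl; rewrite -{1}[x]scale1r fl mul1r. Qed.

Lemma linear_formZ f a x : linear_form f -> f (a *: x) = a * f x.
Proof. by move=> fl; rewrite -[a *: x]addr0 fl linear_form0 // addr0. Qed.

Lemma linear_formN f x : linear_form f -> f (- x) = - f x.
Proof. by move=> fl; rewrite -scaleN1r linear_formZ // mulN1r. Qed.

Lemma linear_formB f x y : linear_form f -> f (x - y) = f x - f y.
Proof. by move=> fl; rewrite linear_formD // linear_formN. Qed.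

End LinearForm.

Section HahnBanach.
Context {R : realType} {Y : lmodType R}.
Variable p : Y -> R.
Hypothesis p_add : forall x y, p (x + y) <= p x + p y.
Hypothesis p_scale : forall (a : R) x, 0 < a -> p (a *: x) = a * p x.

Lemma sublinear0 : p 0 = 0.
Proof. by have := p_scale (0 : Y) (ltr0n R 2); rewrite scaler0 => h; lra. Qed.

Lemma sublinear_le_neg (a : R) x : a < 0 -> a * p x <= p (a *: x).
Proof.
move=> a0; have := p_add (a *: x) ((- a) *: x).
by rewrite -scalerDl subrr scale0r sublinear0 (p_scale (a := - a)) ?oppr_gt0 // => h; lra.
Qed.

Definition dominated_graph (G : set (Y * R)) :=
  [/\ (forall y v v', G (y, v) -> G (y, v') -> v = v'),
      (forall a y1 v1 y2 v2, G (y1, v1) -> G (y2, v2) -> G (a *: y1 + y2, a * v1 + v2)) &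
      (forall y v, G (y, v) -> v <= p y)].

Lemma dominated_graph00 G y v : dominated_graph G -> G (y, v) -> G (0, 0).
Proof.
case=> _ Gc _ Gyv; have := Gc (-1) y v y v Gyv Gyv.
by rewrite scaleN1r addNr mulN1r addNr.
Qed.

Lemma dominated_graphZ G a y v : dominated_graph G -> G (y, v) -> G (a *: y, a * v).
Proof.
move=> dG Gyv; have G00 := dominated_graph00 dG Gyv.
by case: dG => _ Gc _; have := Gc a y v 0 0 Gyv G00; rewrite !addr0.
Qed.

Lemma dominated_graphD G y v y' v' :
  dominated_graph G -> G (y, v) -> G (y', v') -> G (y + y', v + v').
Proof.
by case=> _ Gc _ Gyv Gyv'; have := Gc 1 y v y' v' Gyv Gyv'; rewrite scale1r mul1r.
Qed.

Lemma dominated_graph_bigcup F : F `<=` dominated_graph -> total_on F subset ->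
  dominated_graph (\bigcup_(G in F) G).
Proof.
move=> FG Ftot; split.
- move=> y v v' h1 h2; have [G FG' [Gz1 Gz2]] := bigcup_chain2 Ftot h1 h2.
  by case: (FG _ FG') => Gf _ _; exact: Gf Gz1 Gz2.
- move=> a y1 v1 y2 v2 h1 h2; have [G FG' [Gz1 Gz2]] := bigcup_chain2 Ftot h1 h2.
  by exists G => //; case: (FG _ FG') => _ Gc _; exact: Gc.
- by move=> y v [G FG' Gz]; case: (FG _ FG') => _ _ Gp; exact: Gp Gz.
Qed.

Definition line_graph (y0 : Y) : set (Y * R) :=
  [set z | exists a : R, z = (a *: y0, a * p y0)].

Lemma line_graph_dominated y0 : dominated_graph (line_graph y0).
Proof.
split.
- move=> y v v' [a [-> ->]] [b [yE ->]].
  have [->|ab] := eqVneq a b; first by [].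
  have : (a - b) *: y0 = 0 by rewrite scalerBl yE subrr.
  move/eqP; rewrite scaler_eq0 subr_eq0 (negbTE ab) /= => /eqP ->.
  by rewrite sublinear0 !mulr0.
- move=> a y1 v1 y2 v2 [b [-> ->]] [c [-> ->]].
  by exists (a * b + c); rewrite scalerDl scalerA; congr (_, _); ring.
- move=> y v [a [-> ->]].
  have [a0|a0|->] := ltgtP a 0.
  + exact: sublinear_le_neg.
  + by rewrite p_scale.
  + by rewrite scale0r sublinear0 mul0r.
Qed.

Section OneStepExtension.
Variable G : set (Y * R).
Hypothesis dG : dominated_graph G.
Hypothesis G00 : G (0, 0).
Variable y1 : Y.
Hypothesis y1_notin : forall v, ~ G (y1, v).

(* Any value between the sup of [Sa] and the inf of the [p (d + y1) - v] keeps the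
   extension dominated; we take the sup. *)
Let Sa : set R := [set r | exists d v, G (d, v) /\ r = v - p (d - y1)].

Let Sa_ub d' v' : G (d', v') -> ubound Sa (p (d' + y1) - v').
Proof.
move=> Gd' r [d [v [Gd ->]]].
have [_ _ Gp] := dG; have := Gp _ _ (dominated_graphD dG Gd Gd').
have := p_add (d - y1) (d' + y1).
have -> : d - y1 + (d' + y1) = d + d' by rewrite addrCA subrK addrC.
by move=> h1 h2; lra.
Qed.

Let slope := sup Sa.

Let Sa_has_sup : has_sup Sa.
Proof.
split; first by exists (0 - p (0 - y1)), 0, 0.
by exists (p (0 + y1) - 0); exact: Sa_ub.
Qed.

Let slope_ge d v : G (d, v) -> v - p (d - y1) <= slope.
Proof. by move=> Gd; apply: sup_upper_bound => //; exists d, v. Qed.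

Let slope_le d v : G (d, v) -> slope <= p (d + y1) - v.
Proof. by move=> Gd; apply: ge_sup; [case: Sa_has_sup|exact: Sa_ub]. Qed.

Definition graph_ext : set (Y * R) :=
  [set z | exists d v (l : R), G (d, v) /\ z = (d + l *: y1, v + l * slope)].

Lemma graph_ext_sub : G `<=` graph_ext.
Proof. by move=> [d v] Gd; exists d, v, 0; rewrite scale0r mul0r !addr0. Qed.

Lemma graph_ext_y1 : graph_ext (y1, slope).
Proof. by exists 0, 0, 1; rewrite scale1r mul1r !add0r. Qed.

Lemma graph_ext_functional y w w' : graph_ext (y, w) -> graph_ext (y, w') -> w = w'.
Proof.
have [Gf _ _] := dG.
move=> [d [v [l [Gd [yE ->]]]]] [d' [v' [l' [Gd' [yE' ->]]]]].
have [ll'|ll'] := eqVneq l l'.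
  subst l'; move: yE'; rewrite yE => /addIr dd; subst d'.
  by rewrite (Gf _ _ _ Gd Gd').
exfalso; apply: (@y1_notin ((l - l')^-1 * (v' - v))).
have -> : y1 = (l - l')^-1 *: (d' - d).
  have -> : d' - d = (l - l') *: y1.
    by rewrite scalerBl -[d'](addrK (l' *: y1)) -yE' yE addrAC [d + _]addrC addrK.
  by rewrite scalerA mulVf ?scale1r // subr_eq0.
apply: dominated_graphZ => //.
by have := dominated_graphD dG Gd' (dominated_graphZ (-1) dG Gd); rewrite scaleN1r mulN1r.
Qed.

Lemma graph_ext_le y w : graph_ext (y, w) -> w <= p y.
Proof.
have [_ _ Gp] := dG; move=> [d [v [l [Gd [-> ->]]]]].
have [l0|l0|->] := ltgtP l 0; last by rewrite scale0r mul0r !addr0; exact: Gp.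
- set m := - l; have m0 : 0 < m by rewrite oppr_gt0.
  have := slope_ge (dominated_graphZ m^-1 dG Gd).
  have -> : d + l *: y1 = m *: (m^-1 *: d - y1).
    by rewrite scalerBr scalerA mulfV ?gt_eqF // scale1r /m scaleNr opprK.
  rewrite p_scale // => h.
  have : m * (m^-1 * v - p (m^-1 *: d - y1)) <= m * slope by rewrite ler_pM2l.
  by rewrite mulrBr mulrA mulfV ?gt_eqF // mul1r /m => h2; lra.
- have := slope_le (dominated_graphZ l^-1 dG Gd).
  have -> : d + l *: y1 = l *: (l^-1 *: d + y1).
    by rewrite scalerDr scalerA mulfV ?gt_eqF // scale1r.
  rewrite p_scale // => h.
  have : l * slope <= l * (p (l^-1 *: d + y1) - l^-1 * v) by rewrite ler_pM2l.
  by rewrite mulrBr mulrA mulfV ?gt_eqF // mul1r => h2; lra.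
Qed.

Lemma graph_ext_dominated : dominated_graph graph_ext.
Proof.
split; [exact: graph_ext_functional| |exact: graph_ext_le].
have [_ Gc _] := dG.
move=> a z1 w1 z2 w2 [d [v [l [Gd [-> ->]]]]] [d' [v' [l' [Gd' [-> ->]]]]].
exists (a *: d + d'), (a * v + v'), (a * l + l'); split; first exact: Gc.
congr (_, _); last by ring.
by rewrite scalerDl scalerDr scalerA !addrA; congr (_ + _); rewrite addrAC.
Qed.

End OneStepExtension.

Lemma maximal_dominated_graph_total A : dominated_graph A -> A (0, 0) ->
  (forall B, A `<` B -> ~ dominated_graph B) -> forall y, exists v, A (y, v).
Proof.
move=> dA A00 Amax y; apply: contrapT => Ay.
have Ay' v : ~ A (y, v) by move=> Ayv; apply: Ay; exists v.
apply: (Amax (graph_ext A y)); last exact: graph_ext_dominated.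
split; first exact: graph_ext_sub.
by move=> /(_ _ (graph_ext_y1 A00 y)); exact: Ay'.
Qed.

Theorem hahn_banach y0 : exists L : Y -> R,
  [/\ linear_form L, forall x, L x <= p x & L y0 = p y0].
Proof.
have [A [y0A dA Amax]] := Zorn_above (line_graph_dominated y0) dominated_graph_bigcup.
have [Af Ac Ap] := dA.
have A00 : A (0, 0) by apply: y0A; exists 0; rewrite scale0r mul0r.
pose L y := xget 0 [set v | A (y, v)].
have AL y : A (y, L y) by exact: (xgetPex 0 (maximal_dominated_graph_total dA A00 Amax y)).
have Luniq y v : A (y, v) -> L y = v by move=> Av; exact: Af (AL y) Av.
exists L; split.
- by move=> a x y; apply: Luniq; exact: Ac.
- by move=> x; exact: Ap (AL x).
- by apply: Luniq; apply: y0A; exists 1; rewrite scale1r mul1r.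
Qed.

End HahnBanach.

Section Separation.
Context {R : realType} {Y : lmodType R}.
Implicit Types K B E : set Y.

Definition lconvex K :=
  forall x y (l : R), K x -> K y -> 0 <= l <= 1 -> K (l *: x + (1 - l) *: y).

Definition radial K := forall k y, K k -> \forall t \near 0^'+, K (k + t *: y).

Lemma radial_ex K k y : radial K -> K k -> exists2 t : R, 0 < t & K (k + t *: y).
Proof.
move=> rK Kk; have [t [t0 Kt]] := filter_ex (filterI (nbhs_right_gt 0) (rK k y Kk)).
by exists t.
Qed.

Section Gauge.
Variable K : set Y.
Hypothesis Kconv : lconvex K.
Hypothesis Krad : radial K.
Hypothesis K0 : ~ K 0.
Variable k0 : Y.
Hypothesis Kk0 : K k0.

(* [p] is the Minkowski gauge of [C = K - k0]; a linear form below [p] and equal to it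
   at [- k0] is negative on [K]. *)
Let C : set Y := [set y | K (y + k0)].
Let Gs y := [set t : R | 0 < t /\ C (t^-1 *: y)].
Let p y := inf (Gs y).

Let Cconv : lconvex C.
Proof.
move=> x y l Cx Cy l01; have := Kconv Cx Cy l01.
by rewrite !scalerDr addrACA -scalerDl (addrC l) subrK scale1r.
Qed.

Let C0 : C 0. Proof. by rewrite /C /= add0r. Qed.

Let Gs_ne y : Gs y !=set0.
Proof.
have [d d0 Kd] := radial_ex y Krad Kk0; exists d^-1; split; first by rewrite invr_gt0.
by rewrite /C /= invrK addrC.
Qed.

Let Gs_lb y : has_lbound (Gs y). Proof. by exists 0 => t [/ltW]. Qed.

Let p_le y t : Gs y t -> p y <= t.
Proof. by move=> Gt; apply: ge_inf => //; exact: Gs_lb. Qed.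

Let p_lt1 y : p y < 1 -> C y.
Proof.
move=> /(inf_lt (Gs_ne y)) [t [t0 Ct] t1].
have := Cconv Ct C0 (l := t); rewrite scaler0 addr0 scalerA mulfV ?gt_eqF // scale1r.
by apply; rewrite (ltW t0) (ltW t1).
Qed.

Let p_scale_le (a : R) y : 0 < a -> p (a *: y) <= a * p y.
Proof.
move=> a0; rewrite -ler_pdivrMl //; apply: lb_le_inf => // t [t0 Ct].
rewrite ler_pdivrMl //; apply: p_le; split; first by rewrite mulr_gt0.
by rewrite scalerA invfM mulrAC mulVf ?gt_eqF // mul1r.
Qed.

Let p_scale (a : R) y : 0 < a -> p (a *: y) = a * p y.
Proof.
move=> a0; apply/eqP; rewrite eq_le p_scale_le //=.
have ai : 0 < a^-1 by rewrite invr_gt0.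
have := @p_scale_le a^-1 (a *: y) ai; rewrite scalerA mulVf ?gt_eqF // scale1r.
by rewrite -ler_pdivrMl // invrK.
Qed.

Let p_add x y : p (x + y) <= p x + p y.
Proof.
have key s t : Gs x s -> Gs y t -> p (x + y) <= s + t.
  move=> [s0 Cs] [t0 Ct]; apply: p_le; split; first by rewrite addr_gt0.
  have st0 : s + t != 0 by rewrite gt_eqF // addr_gt0.
  have := Cconv Cs Ct (l := s / (s + t)).
  have -> : 1 - s / (s + t) = t / (s + t).
    by apply/eqP; rewrite subr_eq -mulrDl [t + s]addrC divff.
  rewrite !scalerA mulrAC mulfV ?gt_eqF // mul1r mulrAC mulfV ?gt_eqF // mul1r -scalerDr.
  apply; apply/andP; split; first by rewrite divr_ge0 ?addr_ge0 ?ltW.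
  by rewrite ler_pdivrMr ?addr_gt0 // mul1r lerDl ltW.
rewrite -lerBlDl; apply: lb_le_inf => // t Gt; rewrite lerBlDl -lerBlDr.
by apply: lb_le_inf => // s Gsx; rewrite lerBlDr; exact: key.
Qed.

Lemma radial_separation_at : exists L : Y -> R, linear_form L /\ forall k, K k -> L k < 0.
Proof.
have [L [Llin Lp Lk0]] := hahn_banach p_add p_scale (- k0).
have pk0 : 1 <= p (- k0).
  by rewrite leNgt; apply/negP => /p_lt1; rewrite /C /= addNr; exact: K0.
exists L; split => // k Kk.
have [d d0 Kd] := radial_ex (k - k0) Krad Kk.
have : p (k - k0) <= (1 + d)^-1.
  apply: p_le; split; first by rewrite invr_gt0 addr_gt0.
  by rewrite invrK /C /= scalerDl scale1r addrAC subrK.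
have lt1 : (1 + d)^-1 < 1 by rewrite invf_lt1 ?ltrDl // addr_gt0.
have Lk0' : L k0 = - p (- k0) by rewrite -Lk0 linear_formN // opprK.
by have := Lp (k - k0); rewrite linear_formB // Lk0' => h1 h2; lra.
Qed.

End Gauge.

Lemma radial_separation K : lconvex K -> radial K -> ~ K 0 -> K !=set0 ->
  exists L : Y -> R, linear_form L /\ forall k, K k -> L k < 0.
Proof. by move=> Kc Kr K0 [k0 Kk0]; exact: radial_separation_at Kk0. Qed.

Lemma convex_separation B E : lconvex B -> radial B -> lconvex E ->
  (forall b, B b -> ~ E b) -> B !=set0 -> E !=set0 ->
  exists L : Y -> R, linear_form L /\
    forall b, B b -> exists2 e : R, 0 < e & forall a, E a -> L b + e < L a.
Proof.
move=> Bc Br Ec BE [b0 Bb0] [a0 Ea0].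
pose K := [set b - a | b in B & a in E].
have Kc : lconvex K.
  move=> _ _ l [b Bb [a Ea <-]] [b' Bb' [a' Ea' <-]] l01.
  exists (l *: b + (1 - l) *: b'); first exact: Bc.
  exists (l *: a + (1 - l) *: a'); first exact: Ec.
  by rewrite !scalerBr addrACA -opprD.
have Kr : radial K.
  move=> _ y [b Bb [a Ea <-]]; apply: filterS (Br b y Bb) => t Bt.
  by exists (b + t *: y) => //; exists a => //; rewrite addrAC.
have K0 : ~ K 0.
  by move=> [b Bb [a Ea /eqP]]; rewrite subr_eq0 => /eqP ba; apply: (BE b) => //; rewrite ba.
have Kn0 : K !=set0 by exists (b0 - a0); exists b0 => //; exists a0.
have [L [Ll LK]] := radial_separation Kc Kr K0 Kn0.
have LBE b a : B b -> E a -> L b < L a.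
  by move=> Bb Ea; rewrite -subr_lt0 -linear_formB //; apply: LK; exists b => //; exists a.
exists L; split => // b Bb.
have [t t0 Bt] := radial_ex (a0 - b) Br Bb.
exists (t * (L a0 - L b)); first by rewrite mulr_gt0 // subr_gt0 LBE.
by move=> a Ea; have := LBE _ _ Bt Ea; rewrite linear_formD // linear_formZ // linear_formB.
Qed.

End Separation.

Lemma half_itv01 {R : realFieldType} : 0 <= (2 : R)^-1 <= 1.
Proof. by apply/andP; split; [rewrite invr_ge0 ler0n|rewrite invf_le1 ?ler1n // ltr0n]. Qed.

Section Fitzpatrick.
Context {R : realType} {X : tvsType R}.
Implicit Types (z w u : X * (X -> R)) (S : set (X * (X -> R))).

Lemma dual_linear (f : X -> R) : dual_space f -> linear_form f.
Proof. by case. Qed.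

Lemma dual_comb (f g : X -> R) (a b : R) : dual_space f -> dual_space g ->
  dual_space (fun x => a * f x + b * g x).
Proof.
move=> [fl fc] [gl gc]; split; first by move=> c x y; rewrite fl gl; ring.
by move=> x0; apply: cvgD; apply: cvgMl_tmp; [exact: fc|exact: gc].
Qed.

Lemma dual_scale (f : X -> R) (a : R) : dual_space f -> dual_space (fun x => a * f x).
Proof.
move=> df; have := dual_comb a 0 df df.
by congr dual_space; apply: funext => x; rewrite mul0r addr0.
Qed.

Lemma dual_sub (f g : X -> R) : dual_space f -> dual_space g ->
  dual_space (fun x => f x - g x).
Proof.
move=> df dg; have := dual_comb 1 (-1) df dg.
by congr dual_space; apply: funext => x; rewrite mul1r mulN1r.
Qed.

Lemma Zsp_zcomb (l : R) z w : Zsp z -> Zsp w -> Zsp (zcomb l z w).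
Proof. exact: dual_comb. Qed.

Definition fitz_term z u : R := u.2 z.1 + z.2 u.1 - u.2 u.1.

Lemma fitz_term_le S z u : S u -> ((fitz_term z u)%:E <= fitzpatrick S z)%E.
Proof. by move=> Su; apply: ereal_sup_ubound; exists u. Qed.

Lemma fitz_leP S z (r : R) :
  (fitzpatrick S z <= r%:E)%E <-> forall u, S u -> fitz_term z u <= r.
Proof.
split=> [h u Su|h]; first by rewrite -lee_fin; apply: le_trans h; exact: fitz_term_le.
by apply: ge_ereal_sup => _ [u Su <-]; rewrite lee_fin h.
Qed.

Lemma fitz_subset_le S S' z : S `<=` S' -> (fitzpatrick S z <= fitzpatrick S' z)%E.
Proof. by move=> SS'; apply: ereal_sup_le => _ [u Su <-]; exists u => //; exact: SS'. Qed.

Lemma fitz_gt S z (a : R) :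
  (a%:E < fitzpatrick S z)%E -> exists2 u, S u & a < fitz_term z u.
Proof. by move=> /ereal_sup_gt [_ [u Su <-]]; rewrite lte_fin; exists u. Qed.

Lemma fitz_term_self z : fitz_term z z = coupling z.
Proof. by rewrite /fitz_term /coupling addrK. Qed.

Lemma fitz_term_mon z u : Zsp z -> Zsp u ->
  fitz_term z u = coupling z - (z.2 (z.1 - u.1) - u.2 (z.1 - u.1)).
Proof.
move=> dz du; rewrite /fitz_term /coupling.
by rewrite !(linear_formB _ _ (dual_linear dz)) !(linear_formB _ _ (dual_linear du)); ring.
Qed.

Lemma mon_related_fitz_term z u : Zsp z -> Zsp u ->
  mon_related z u <-> fitz_term z u <= coupling z.
Proof. by move=> dz du; rewrite fitz_term_mon // gerBl. Qed.

Lemma mon_related_refl z : mon_related z z.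
Proof. by rewrite /mon_related !subrr. Qed.

Lemma mon_related_sym z w : Zsp z -> Zsp w -> mon_related z w -> mon_related w z.
Proof.
move=> dz dw; rewrite /mon_related !(linear_formB _ _ (dual_linear dz)).
by rewrite !(linear_formB _ _ (dual_linear dw)) => h; lra.
Qed.

Lemma fitz_le_coupling S z : S `<=` Zsp -> Zsp z ->
  (fitzpatrick S z <= (coupling z)%:E)%E <-> forall u, S u -> mon_related z u.
Proof.
move=> SZ dz; rewrite fitz_leP.
by split=> h u Su; apply/(mon_related_fitz_term dz (SZ _ Su)); exact: h.
Qed.

Lemma fitz_term_zcomb (l : R) z w u : Zsp u ->
  fitz_term (zcomb l z w) u = l * fitz_term z u + (1 - l) * fitz_term w u.
Proof.
move=> du; rewrite /fitz_term /= (linear_formD _ _ (dual_linear du)).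
by rewrite !(linear_formZ _ _ (dual_linear du)); ring.
Qed.

Lemma fitz_convex S : S `<=` Zsp -> convex_on_Z (fitzpatrick S).
Proof.
move=> SZ z w r s l dz dw /fitz_leP hz /fitz_leP hw /andP [l0 l1].
apply/fitz_leP => u Su; rewrite fitz_term_zcomb; last exact: SZ.
by apply: lerD; apply: ler_wpM2l; rewrite ?subr_ge0 //; [exact: hz|exact: hw].
Qed.

Lemma fitz_lsc S : S `<=` Zsp -> tw_lsc (fitzpatrick S).
Proof.
move=> SZ a z dz /= /fitz_gt [u Su au].
set d := fitz_term z u - a.
have d0 : 0 < d / 2 by rewrite divr_gt0 // subr_gt0.
have /cvgrPdist_lt /(_ _ d0) Nz := (SZ _ Su).2 z.1.
exists [set t | `|u.2 z.1 - u.2 t| < d / 2]; split; first exact: Nz.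
exists [:: u.1], (d / 2); split => // x ys Nx dys /(_ u.1 (mem_head _ _)) hy.
apply: lt_le_trans (fitz_term_le _ Su); rewrite lte_fin.
move: Nx hy; rewrite /d /fitz_term /= !ltr_norml => /andP [h1 h1'] /andP [h2 h2'].
lra.
Qed.

Lemma coupling_zcomb (l : R) z w : Zsp z -> Zsp w ->
  coupling (zcomb l z w) = l * l * coupling z + (1 - l) * (1 - l) * coupling w
     + l * (1 - l) * (z.2 w.1 + w.2 z.1).
Proof.
move=> dz dw; rewrite /coupling /= !(linear_formD _ _ (dual_linear dz)).
rewrite !(linear_formD _ _ (dual_linear dw)).
by rewrite !(linear_formZ _ _ (dual_linear dz)) !(linear_formZ _ _ (dual_linear dw)); ring.
Qed.

(* At the midpoint [c = (c z + c w + <z, w^*> + <w, z^*>) / 4] while convexity bounds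
   [h] by [(c z + c w) / 2]; the difference is [<z - w, z^* - w^*> / 4]. *)
Lemma midpoint_mon_related (h : X * (X -> R) -> \bar R) z w :
  convex_on_Z h -> Zsp z -> Zsp w ->
  (h z <= (coupling z)%:E)%E -> (h w <= (coupling w)%:E)%E ->
  ((coupling (zcomb 2^-1 z w))%:E <= h (zcomb 2^-1 z w))%E -> mon_related z w.
Proof.
move=> hc dz dw hz hw hm.
have := le_trans hm (hc _ _ _ _ _ dz dw hz hw half_itv01).
rewrite lee_fin coupling_zcomb // /mon_related /coupling.
rewrite !(linear_formB _ _ (dual_linear dz)) !(linear_formB _ _ (dual_linear dw)).
have -> : 1 - (2 : R)^-1 = 2^-1 by field.
by move=> h2; lra.
Qed.

Definition psi_minorant S (h : X * (X -> R) -> \bar R) := convex_on_Z h /\ tw_lsc h /\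
  forall w, Zsp w -> (h w <= (coupling w)%:E + indic_graph S w)%E.

Lemma psi_hull_ge S h z : psi_minorant S h -> (h z <= psi_hull S z)%E.
Proof. by move=> hS; apply: ereal_sup_ubound; exists h. Qed.

Lemma psi_hull_le S z (r : \bar R) :
  (forall h, psi_minorant S h -> (h z <= r)%E) -> (psi_hull S z <= r)%E.
Proof. by move=> H; apply: ge_ereal_sup => _ [h hS <-]; exact: H. Qed.

Lemma psi_minorant_le_coupling S h w : psi_minorant S h -> Zsp w -> S w ->
  (h w <= (coupling w)%:E)%E.
Proof.
by move=> [_ [_ hS]] dw Sw; have := hS w dw; rewrite /indic_graph asboolT // adde0.
Qed.

Lemma psi_minorantP S h : convex_on_Z h -> tw_lsc h ->
  (forall w, Zsp w -> S w -> (h w <= (coupling w)%:E)%E) -> psi_minorant S h.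
Proof.
move=> hc hl hS; split => //; split => // w dw; rewrite /indic_graph.
case: asboolP => [Sw|_]; first by rewrite adde0; exact: hS.
by rewrite addey // leey.
Qed.

Lemma fitz_psi_minorant T' S : T' `<=` Zsp -> monotone_op T' -> S `<=` T' ->
  psi_minorant S (fitzpatrick T').
Proof.
move=> TZ mT ST; apply: psi_minorantP; [exact: fitz_convex|exact: fitz_lsc|].
by move=> w dw Sw; apply/fitz_le_coupling => // u Tu; apply: mT => //; exact: ST.
Qed.

Lemma psi_hull_subset_le S S' z : S `<=` S' -> (psi_hull S' z <= psi_hull S z)%E.
Proof.
move=> SS'; apply: psi_hull_le => h hS'; apply: psi_hull_ge.
have [hc [hl _]] := hS'; apply: psi_minorantP => // w dw Sw.
exact: psi_minorant_le_coupling hS' dw (SS' _ Sw).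
Qed.

Lemma psi_hull_convex S : convex_on_Z (psi_hull S).
Proof.
move=> z w r s l dz dw hz hw l01; apply: psi_hull_le => h hS.
have [hc _] := hS; apply: hc => //; exact: le_trans (psi_hull_ge _ hS) _.
Qed.

Lemma psi_hull_lsc S : tw_lsc (psi_hull S).
Proof.
move=> a z dz /= /ereal_sup_gt [_ [h hS <-]] ah.
have [N [Nz [F [e [e0 H]]]]] := hS.2.1 a z dz ah.
exists N; split => //; exists F, e; split => // x ys Nx dys hF.
exact: lt_le_trans (H x ys Nx dys hF) (psi_hull_ge _ hS).
Qed.

Lemma monotone_bigcup (F : set (set (X * (X -> R)))) :
  F `<=` [set A | A `<=` Zsp /\ monotone_op A] -> total_on F subset ->
  (\bigcup_(A in F) A) `<=` Zsp /\ monotone_op (\bigcup_(A in F) A).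
Proof.
move=> FP Ftot; split; first by move=> z [A FA Az]; exact: (FP _ FA).1.
move=> z w zF wF; have [A FA [Az Aw]] := bigcup_chain2 Ftot zF wF.
exact: (FP _ FA).2.
Qed.

(* A maximal monotone extension [T'] of [S]: every [z] monotonically related to [T']
   already lies in [T'], whence [c <= fitzpatrick T'] on [Z]. *)
Lemma monotone_ext_fitz_ge S : S `<=` Zsp -> monotone_op S ->
  exists T', [/\ T' `<=` Zsp, monotone_op T', S `<=` T' &
    forall z, Zsp z -> ((coupling z)%:E <= fitzpatrick T' z)%E].
Proof.
move=> SZ mS; have [A [SA [AZ mA] Amax]] := Zorn_above (conj SZ mS) monotone_bigcup.
exists A; split => // z dz.
have [Az|nAz] := pselect (A z); first by rewrite -fitz_term_self; exact: fitz_term_le.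
rewrite leNgt; apply/negP => /ltW /(fitz_le_coupling AZ dz) rel.
apply: (Amax (A `|` [set z])).
  by split; [move=> y Ay; left|move=> /(_ z (or_intror erefl))].
split; first by move=> y [/AZ|->].
move=> y y' [Ay|->] [Ay'|->].
- exact: mA.
- by apply: mon_related_sym => //; [exact: AZ|exact: rel].
- exact: rel.
- exact: mon_related_refl.
Qed.

End Fitzpatrick.

Lemma affine_near0_lt {R : realType} (c a e : R) :
  c < e -> \forall t \near 0^'+, c + t * a < e.
Proof.
move=> ce; pose d := (e - c) / (`|a| + 1).
have a1 : 0 < `|a| + 1 by rewrite ltr_pwDr.
have d0 : 0 < d by rewrite divr_gt0 // subr_gt0.
near=> t.
have t0 : 0 < t by near: t; exact: nbhs_right_gt.
have td : t < d by near: t; exact: nbhs_right_lt.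
have : t * (`|a| + 1) < e - c by rewrite -ltr_pdivlMr.
have : t * a <= t * `|a| by apply: ler_wpM2l; [exact: ltW|exact: ler_norm].
by move=> h1 h2; lra.
Unshelve. all: by end_near. Qed.

Lemma affine_near0_le0 {R : realType} (c a : R) :
  (\forall t \near 0^'+, c + t * a <= 0) -> c <= 0.
Proof.
move=> h; rewrite leNgt; apply/negP => c0.
have nc0 : - c < 0 by rewrite oppr_lt0.
by have [t [h1 h2]] := filter_ex (filterI (affine_near0_lt (- a) nc0) h); lra.
Qed.

Lemma convex_comb_lt {R : realFieldType} (l a b e : R) :
  0 <= l <= 1 -> a < e -> b < e -> l * a + (1 - l) * b < e.
Proof.
move=> /andP [l0 l1] ae be; have hM : Num.max a b < e by rewrite gt_max ae be.
have h1 : 0 <= l * (Num.max a b - a) by rewrite mulr_ge0 // subr_ge0 le_max lexx.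
have h2 : 0 <= (1 - l) * (Num.max a b - b).
  by rewrite mulr_ge0 ?subr_ge0 // le_max lexx orbT.
lra.
Qed.

Lemma near_all_mem {T : Type} {U : eqType} (F : set_system T) {FF : Filter F}
    (s : seq U) (P : U -> T -> Prop) :
  (forall v, v \in s -> \forall t \near F, P v t) ->
  \forall t \near F, forall v, v \in s -> P v t.
Proof.
elim: s => [|v s IH] H; first by apply: nearW => t v; rewrite in_nil.
have Hs w : w \in s -> \forall t \near F, P w t.
  by move=> ws; apply: H; rewrite in_cons ws orbT.
apply: filterS (filterI (H v (mem_head _ _)) (IH Hs)) => t [Pv Ps] w.
by rewrite in_cons => /orP [/eqP ->|/Ps].
Qed.

Section Topology.
Context {R : realType} {X : tvsType R}.

Lemma convex_nbhs (x : X) (N : set X) : nbhs x N ->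
  exists N' : set X, [/\ open N', N' x, N' `<=` N & lconvex N'].
Proof.
move=> Nx; have [B Bc [Bo Bb]] := @locally_convex R X.
have [U [BU Ux] UN] := Bb x N Nx.
exists U; split => //; first exact: Bo.
move=> y y' l Uy Uy' /andP [l0 l1].
by have := Bc U (mem_set BU) y y' (Itv01 l0 l1); rewrite !inE; apply.
Qed.

Lemma nbhs_shift0 (N : set X) (n : X) : nbhs n N -> nbhs (0 : X) [set v | N (n + v)].
Proof.
move=> Nn; have := @nbhsB R X N n (- n); rewrite addNr => /(_ Nn).
by apply: filterS => v [w Nw <-]; rewrite /= addNKr.
Qed.

Lemma open_radial (N : set X) : open N -> radial N.
Proof.
move=> oN n y Nn; have U0 := nbhs_shift0 (open_nbhs_nbhs (conj oN Nn)).
have /= := scale_continuous (0, y) [set v | N (n + v)].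
rewrite scale0r => /(_ U0) [] /= B [B1 B2] BU.
rewrite near_withinE; apply: filterS B1 => t Bt _.
by apply: (BU (t, y)); split => //; exact: nbhs_singleton.
Qed.

Lemma algebraically_open_radial (V : set X) : algebraically_open V -> radial V.
Proof.
move=> aoV x y Vx; have [d d0 Hd] := aoV x Vx y.
near=> t; apply: Hd; apply/andP; split.
  by near: t; exact: nbhs_right_ge.
by near: t; exact: nbhs_right_ltW.
Unshelve. all: by end_near. Qed.

Lemma linear_form_bounded_continuous (f : X -> R) (x : X) (N : set X) (M : R) :
  linear_form f -> nbhs x N -> (forall y, N y -> f y < M) -> dual_space f.
Proof.
move=> fl Nx fM; split => // x0.
set m := M - f x.
have m0 : 0 < m by rewrite subr_gt0; apply: fM; exact: nbhs_singleton.
have W0 : nbhs (0 : X) [set w | N (x + w) /\ N (x - w)].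
  have A0 := nbhs_shift0 Nx.
  apply: filterS (filterI A0 (@nbhs0N R X _ A0)) => w [h1 [v h2 vw]].
  by split => //; rewrite -vw opprK.
have Wb w : N (x + w) /\ N (x - w) -> `|f w| < m.
  move=> [h1 h2]; have := fM _ h1; have := fM _ h2.
  rewrite !linear_formD // linear_formN // /m ltr_norml => a b; apply/andP; split; lra.
apply/cvgrPdist_lt => eps eps0.
set k := m / eps.
have k0 : k^-1 != 0 by rewrite invr_eq0 gt_eqF // divr_gt0.
have := @nbhsB R X _ 0 x0 (@nbhs0Z R X _ _ k0 W0); rewrite addr0.
apply: filterS => _ [_ [w Ww <-] <-].
rewrite (linear_formD _ _ fl) (linear_formZ _ _ fl) opprD addNKr normrN normrM.
rewrite ger0_norm ?invr_ge0 ?ltW ?divr_gt0 //.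
by rewrite /k invf_div mulrAC ltr_pdivrMr // ltr_pM2l //; exact: Wb.
Qed.

Lemma eval_representation (F : seq X) (l : (X -> R^o) -> R) : linear_form l ->
  (forall g, (forall u, u \in F -> g u = 0) -> l g = 0) ->
  exists a : X, forall g : X -> R, dual_space g -> l g = g a.
Proof.
elim: F l => [|u F IH] l ll lz.
  exists 0 => g dg; rewrite (linear_form0 (dual_linear dg)).
  by apply: (lz g) => u; rewrite in_nil.
pose ind : X -> R^o := fun v => if v == u then 1 else 0.
pose l' g := l g - l ind * g u.
have l'l : linear_form l'.
  by move=> a g g'; rewrite /l' ll; have -> : (a *: g + g') u = a * g u + g' u by []; ring.
have l'z g : (forall v, v \in F -> g v = 0) -> l' g = 0.
  move=> gF; have : l (g - g u *: ind) = 0.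
    have gv v : (g - g u *: ind) v = g v - g u * ind v by [].
    apply: lz => v; rewrite in_cons gv => /orP [/eqP ->|vF].
      by rewrite /ind eqxx mulr1 subrr.
    rewrite gF // /ind; case: eqP => [vu|_]; last by rewrite mulr0 subrr.
    by rewrite -vu gF // mul0r subrr.
  by rewrite linear_formB // linear_formZ // /l' => h; lra.
have [a Ha] := IH l' l'l l'z.
exists (a + l ind *: u) => g dg.
have gl := dual_linear dg.
by rewrite (linear_formD _ _ gl) (linear_formZ _ _ gl) -(Ha g dg) /l'; ring.
Qed.

Definition wstar_ball (F : seq X) (e : R) (g0 : X -> R) : set (X -> R^o) :=
  [set g | forall v, v \in F -> `|g v - g0 v| < e].

Lemma wstar_ball_center F e g0 : 0 < e -> wstar_ball F e g0 g0.
Proof. by move=> e0 v _; rewrite subrr normr0. Qed.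

Lemma wstar_ball_convex F e g0 : lconvex (wstar_ball F e g0).
Proof.
move=> g g' l gF g'F l01 v vF; have /andP [l0 l1] := l01.
have -> : (l *: g + (1 - l) *: g') v - g0 v =
    l * (g v - g0 v) + (1 - l) * (g' v - g0 v).
  by have -> : (l *: g + (1 - l) *: g') v = l * g v + (1 - l) * g' v by []; ring.
apply: le_lt_trans (ler_normD _ _) _.
rewrite !normrM (ger0_norm l0) (@ger0_norm _ (1 - l)) ?subr_ge0 //.
exact: convex_comb_lt l01 (gF v vF) (g'F v vF).
Qed.

Lemma wstar_ball_radial F e g0 : radial (wstar_ball F e g0).
Proof.
move=> g y gF; apply: near_all_mem => v vF.
have /ltr_normlP [h1 h2] := gF v vF.
near=> t; have -> : (g + t *: y) v = g v + t * y v by [].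
rewrite ltr_norml; apply/andP; split.
  suff : - (g v - g0 v) + t * - y v < e by lra.
  by near: t; exact: affine_near0_lt.
suff : g v - g0 v + t * y v < e by lra.
by near: t; exact: affine_near0_lt.
Unshelve. all: by end_near. Qed.

End Topology.

Lemma scale_bounded_eq0 {R : realFieldType} (c M : R) : (forall k, k * c < M) -> c = 0.
Proof.
move=> H; apply: contrapT => /eqP c0.
have := H ((`|M| + 1) / c); rewrite mulfVK // => h.
by have := ler_norm M; lra.
Qed.

Lemma left_bounded_ge0 {R : realFieldType} (c r M : R) :
  (forall t, t < r -> t * c < M) -> 0 <= c.
Proof.
move=> H; rewrite leNgt; apply/negP => c0.
pose t := Num.min (r - 1) ((`|M| + 1) / c).
have := H t; rewrite gt_min ltrBlDr ltrDl ltr01 => /(_ isT).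
have : `|M| + 1 <= t * c.
  by rewrite -[leLHS](mulfVK (negbT (lt_eqF c0))) ?ler_nM2r // ge_min lexx orbT.
by have := ler_norm M; lra.
Qed.

Section EpigraphSeparation.
Context {R : realType} {X : tvsType R}.
Local Notation Zt := (X * ((X -> R^o) * R^o))%type.

Lemma linear_form_Zt (L : Zt -> R) y g t : linear_form L ->
  L (y, (g, t)) = L (y, (0, 0)) + L (0, (g, 0)) + t * L (0, (0, 1)).
Proof.
move=> Ll.
have -> : (y, (g, t)) = (y, (0, 0)) + (0, (g, 0)) + t *: (0, (0, 1)) :> Zt.
  by congr (_, (_, _)) => /=; rewrite ?scaler0 ?addr0 ?add0r // /GRing.scale /= mulr1.
by rewrite !(linear_formD _ _ Ll) (linear_formZ _ _ Ll).
Qed.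

(* [B = N x W x (-oo, r)], with [W] a weak-star ball around [z^*], is separated from the
   epigraph [E] of [h] by a linear form on [X x R^X x R]; being bounded on [B], the form
   is continuous in [x] and depends on the [R^X] component only through the points of
   [F]. *)
Variables (h : X * (X -> R) -> \bar R) (z : X * (X -> R)) (N : set X) (F : seq X) (e r : R).

Let B : set Zt := [set b | [/\ N b.1, wstar_ball F e z.2 b.2.1 & b.2.2 < r]].
Let E : set Zt := [set a | Zsp (a.1, a.2.1) /\ (h (a.1, a.2.1) <= a.2.2%:E)%E].

Hypothesis e0 : 0 < e.

Let Bz t : N z.1 -> t < r -> B (z.1, (z.2, t)).
Proof. by move=> Nz tr; split => //; exact: wstar_ball_center. Qed.

Section SeparatingFunctional.
Variable L : Zt -> R.
Hypothesis Llin : linear_form L.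
Variable a0 : Zt.
Hypothesis Ea0 : E a0.
Hypothesis LBE : forall b a, B b -> E a -> L b < L a.
Hypothesis Nnbhs : nbhs z.1 N.

Let f y := L (y, (0, 0)).
Let l g := L (0, (g, 0)).
Let slope := L (0, (0, 1)).

Let f_lin : linear_form f.
Proof.
move=> a y1 y2; rewrite /f -linear_formZ // -linear_formD //.
by congr L; congr (_, (_, _)); rewrite /= ?scaler0 ?addr0.
Qed.

Let l_lin : linear_form l.
Proof.
move=> a g g'; rewrite /l -linear_formZ // -linear_formD //.
by congr L; congr (_, (_, _)); rewrite /= ?scaler0 ?addr0.
Qed.

Let LBz t : t < r -> f z.1 + l z.2 + t * slope < L a0.
Proof.
move=> tr; rewrite /f /l /slope -linear_form_Zt //.
exact: LBE (Bz (nbhs_singleton Nnbhs) tr) Ea0.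
Qed.

Lemma separating_functional_dual : dual_space f.
Proof.
apply: (linear_form_bounded_continuous (M := L a0 - l z.2 - (r - 1) * slope) f_lin Nnbhs).
move=> y Ny.
have : B (y, (z.2, r - 1)) by split => //=; [exact: wstar_ball_center|lra].
by move=> /LBE /(_ Ea0); rewrite linear_form_Zt // /f /l /slope => hh; lra.
Qed.

Lemma separating_functional_eval : exists a : X, forall g, dual_space g -> l g = g a.
Proof.
apply: (eval_representation (F := F) l_lin) => g gF.
apply: (@scale_bounded_eq0 _ _ (L a0 - f z.1 - l z.2 - (r - 1) * slope)) => k.
have : B (z.1, (k *: g + z.2, r - 1)).
  split => /= [|v vF|]; [exact: nbhs_singleton Nnbhs| |lra].
  by have -> : (k *: g + z.2) v = k * g v + z.2 v by []; rewrite gF // mulr0 add0r subrr normr0.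
move=> /LBE /(_ Ea0); rewrite linear_form_Zt //.
rewrite -[L (0, (_, 0))]/(l _) l_lin.
by rewrite /f /l /slope => hh; lra.
Qed.

Lemma separating_functional_slope_ge0 : 0 <= slope.
Proof.
apply: (@left_bounded_ge0 _ _ r (L a0 - f z.1 - l z.2)) => t tr.
by have := LBz tr; lra.
Qed.

End SeparatingFunctional.

Hypothesis hconv : convex_on_Z h.
Hypothesis Nopen : open N.
Hypothesis Nconv : lconvex N.
Hypothesis Nz : N z.1.
Hypothesis h_gt : forall x ys, N x -> dual_space ys -> wstar_ball F e z.2 ys ->
  (r%:E < h (x, ys))%E.

Let B_convex : lconvex B.
Proof.
move=> b b' l [b1 b2 b3] [b1' b2' b3'] l01; split.
- exact: (Nconv b1 b1' l01).
- exact: (wstar_ball_convex b2 b2' l01).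
- exact: (convex_comb_lt l01 b3 b3').
Qed.

Let B_radial : radial B.
Proof.
move=> b y [b1 b2 b3].
have h1 := open_radial Nopen y.1 b1.
have h2 := wstar_ball_radial y.2.1 b2.
have h3 := affine_near0_lt y.2.2 b3.
by apply: filterS (filterI h1 (filterI h2 h3)) => t [? [? ?]].
Qed.

Let E_convex : lconvex E.
Proof.
move=> a a' l [a1 a2] [a1' a2'] l01.
by split; [exact: (Zsp_zcomb l a1 a1')|exact: (hconv a1 a1' a2 a2' l01)].
Qed.

Let BE_disjoint b : B b -> ~ E b.
Proof.
move=> [b1 b2 b3] [db hb]; have := lt_le_trans (h_gt b1 db b2) hb.
by rewrite lte_fin => /(lt_trans b3); rewrite ltxx.
Qed.

Lemma epigraph_separation_at (s : R) u0 (t0 : R) :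
  Zsp z -> s < r -> Zsp u0 -> (h u0 <= t0%:E)%E ->
  exists (f : X -> R) (a : X) (g : R), [/\ dual_space f, 0 <= g &
    exists2 d : R, 0 < d & forall u (t : R), Zsp u -> (h u <= t%:E)%E ->
      f z.1 + z.2 a + g * s + d < f u.1 + u.2 a + g * t].
Proof.
move=> dz sr du0 hu0.
have Ea0 : E (u0.1, (u0.2, t0)) by case: u0 du0 hu0.
have Eu u t : Zsp u -> (h u <= t%:E)%E -> E (u.1, (u.2, t)) by case: u.
have Bs : B (z.1, (z.2, s)) by exact: Bz.
have Bne : B !=set0 by exists (z.1, (z.2, s)).
have Ene : E !=set0 by exists (u0.1, (u0.2, t0)).
have [L [Llin LBE]] := convex_separation B_convex B_radial E_convex BE_disjoint Bne Ene.
have LBE' b a : B b -> E a -> L b < L a.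
  by move=> Bb Ea; have [d d0 /(_ a Ea)] := LBE b Bb; apply: le_lt_trans; rewrite lerDl ltW.
have Nnz : nbhs z.1 N by exact: open_nbhs_nbhs.
have [a Ha] := separating_functional_eval Llin Ea0 LBE' Nnz.
exists (fun y => L (y, (0, 0))), a, (L (0, (0, 1))); split.
- exact: separating_functional_dual Ea0 LBE' Nnz.
- exact: separating_functional_slope_ge0 Ea0 LBE' Nnz.
have [d d0 Hd] := LBE _ Bs; exists d => // u t du hu.
have := Hd _ (Eu u t du hu).
rewrite (linear_form_Zt z.1 z.2 s Llin) (linear_form_Zt u.1 u.2 t Llin) (Ha _ dz) (Ha _ du).
by rewrite [_ * L _]mulrC [t * _]mulrC.
Qed.

End EpigraphSeparation.

Lemma lsc_convex_separation {R : realType} {X : tvsType R} (h : X * (X -> R) -> \bar R) z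
    (s : R) u0 (t0 : R) :
  convex_on_Z h -> tw_lsc h -> Zsp z -> (s%:E < h z)%E -> Zsp u0 -> (h u0 <= t0%:E)%E ->
  exists (f : X -> R) (a : X) (g : R), [/\ dual_space f, 0 <= g &
    exists2 d : R, 0 < d & forall u (t : R), Zsp u -> (h u <= t%:E)%E ->
      f z.1 + z.2 a + g * s + d < f u.1 + u.2 a + g * t].
Proof.
move=> hc hl dz shz du0 hu0.
have [r [sr rh]] : exists r : R, s < r /\ (r%:E < h z)%E.
  move: shz; case: (h z) => [c| |] //=; rewrite ?lte_fin => sc.
  - by exists ((s + c) / 2); split; [|rewrite lte_fin]; lra.
  - by exists (s + 1); split; [lra|rewrite ltry].
have [N [Nx [F [e [e0 HN]]]]] := hl r z dz rh.
have [N' [oN' N'x N'N cN']] := convex_nbhs Nx.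
apply: (epigraph_separation_at e0 hc oN' cN' N'x _ dz sr du0 hu0).
by move=> x ys /N'N; exact: HN.
Qed.

Section RepresentabilityKey.
Context {R : realType} {X : tvsType R}.
Implicit Types (z w u : X * (X -> R)).

Variables (S : set (X * (X -> R))) (V : set X).
Hypothesis SZ : S `<=` Zsp.
Hypothesis Vrad : radial V.
Hypothesis NI : forall y, Zsp y -> V y.1 -> ((coupling y)%:E <= fitzpatrick S y)%E.

(* Moving from [z] towards [w] stays in [V]; the NI inequality along the segment,
   divided by the step [t], gives the bound in the limit [t -> 0+]. *)
Lemma NI_cross_le z w (K : R) : Zsp z -> V z.1 ->
  (fitzpatrick S z <= (coupling z)%:E)%E -> Zsp w -> (fitzpatrick S w <= K%:E)%E ->
  z.2 w.1 + w.2 z.1 - coupling z <= K.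
Proof.
move=> dz Vz hz dw hw; rewrite -subr_le0.
apply: (@affine_near0_le0 _ _ (coupling z + coupling w - (z.2 w.1 + w.2 z.1))).
near=> t.
have t0 : 0 < t by near: t; exact: nbhs_right_gt.
have t1 : t <= 1 by near: t; exact: nbhs_right_ltW.
have Vt : V (zcomb (1 - t) z w).1.
  suff -> : (zcomb (1 - t) z w).1 = z.1 + t *: (w.1 - z.1) by near: t; exact: Vrad.
  rewrite /=; have -> : 1 - (1 - t) = t by ring.
  by rewrite scalerBl scale1r scalerBr addrAC addrA.
have l01 : 0 <= 1 - t <= 1 by rewrite subr_ge0 t1 gerBl ltW.
have := le_trans (NI (Zsp_zcomb _ dz dw) Vt) (fitz_convex SZ dz dw hz hw l01).
rewrite lee_fin coupling_zcomb // => h.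
by rewrite -(pmulr_rle0 _ t0); lra.
Unshelve. all: by end_near. Qed.

Section NoSeparation.
Variables (z : X * (X -> R)) (f : X -> R) (a : X) (g d : R).
Hypotheses (dz : Zsp z) (Vz : V z.1) (hz : (fitzpatrick S z <= (coupling z)%:E)%E).
Hypotheses (df : dual_space f) (d0 : 0 < d).
Hypothesis Hsep : forall u, S u ->
  f z.1 + z.2 a + g * coupling z + d < f u.1 + u.2 a + g * coupling u.

Lemma no_separation_pos : 0 < g -> False.
Proof.
move=> g0; have gi : 0 < g^-1 by rewrite invr_gt0.
pose w := (- g^-1 *: a, fun v => - g^-1 * f v).
have dw : Zsp w by exact: dual_scale.
have hw : (fitzpatrick S w <= (- g^-1 * (f z.1 + z.2 a + d) - coupling z)%:E)%E.
  apply/fitz_leP => u Su; have := Hsep Su.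
  rewrite /fitz_term /= (linear_formZ _ _ (dual_linear (SZ Su))) /coupling.
  rewrite -(ltr_pM2l gi) !mulrDr !mulrA mulVf ?gt_eqF // !mul1r => hh.
  by apply: ltW; lra.
have := NI_cross_le dz Vz hz dw hw; rewrite /= (linear_formZ _ _ (dual_linear dz)).
have : 0 < g^-1 * d by rewrite mulr_gt0.
by move=> gd hh; lra.
Qed.

Lemma no_separation_zero : g = 0 -> False.
Proof.
move=> g0; pose w : X * (X -> R) := (z.1 - a, fun v => z.2 v - f v).
have dw : Zsp w by exact: dual_sub.
have hw : (fitzpatrick S w <= (coupling z - f z.1 - z.2 a - d)%:E)%E.
  apply/fitz_leP => u Su; have := Hsep Su; have := (fitz_leP _ _ _).1 hz u Su.
  rewrite /fitz_term /= (linear_formB _ _ (dual_linear (SZ Su))) g0 !mul0r !addr0.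
  by move=> hh1 hh2; lra.
have := NI_cross_le dz Vz hz dw hw.
by rewrite /= (linear_formB _ _ (dual_linear dz)) /coupling => hh; move: d0; lra.
Qed.

End NoSeparation.

Lemma psi_minorant_le_coupling_NI z h : S !=set0 -> Zsp z -> V z.1 ->
  (fitzpatrick S z <= (coupling z)%:E)%E -> psi_minorant S h -> (h z <= (coupling z)%:E)%E.
Proof.
move=> [u0 Su0] dz Vz hz hS; have [hc [hl _]] := hS.
rewrite leNgt; apply/negP => czh.
have du0 := SZ Su0; have hu0 := psi_minorant_le_coupling hS du0 Su0.
have [f [a [g [df g0 [d d0 Hd]]]]] := lsc_convex_separation hc hl dz czh du0 hu0.
have Hsep u : S u -> f z.1 + z.2 a + g * coupling z + d < f u.1 + u.2 a + g * coupling u.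
  by move=> Su; apply: Hd; [exact: SZ|exact: psi_minorant_le_coupling hS (SZ Su) Su].
move: g0; rewrite le_eqVlt => /orP [/eqP g0|g0].
  exact: (no_separation_zero dz Vz hz df d0 Hsep (esym g0)).
exact: (no_separation_pos dz Vz hz df d0 Hsep g0).
Qed.

End RepresentabilityKey.

Section Theorem34.
Context {R : realType} {X : tvsType R}.
Implicit Types (z w u : X * (X -> R)).
Variables (T : set (X * (X -> R))) (V : set X).
Hypothesis TZ : T `<=` Zsp.
Hypothesis aoV : algebraically_open V.
Hypothesis cV : convex_subset V.
Hypothesis Sne : nonvoid_op (restr_op T V).
Hypothesis monS : monotone_op (restr_op T V).
Hypothesis NI : V_NI V T.

Local Notation S := (restr_op T V).
Local Notation M := (eqc_on V (fitzpatrick S)).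

Let SZ : S `<=` Zsp. Proof. by move=> z [/TZ]. Qed.

Lemma lec_fitz_restr : lec_on V (fitzpatrick S) = M.
Proof.
apply/seteqP; split => z [dz [Vz hz]]; split => //; split => //.
  by apply/eqP; rewrite eq_le hz NI.
by rewrite hz.
Qed.

Let Mfitz z : M z <-> [/\ Zsp z, V z.1 & (fitzpatrick S z <= (coupling z)%:E)%E].
Proof.
by rewrite -lec_fitz_restr; split => [[dz [Vz hz]]|[dz Vz hz]].
Qed.

Lemma restr_sub_eqc_fitz : S `<=` M.
Proof.
move=> s Ss; apply/Mfitz; split; [exact: SZ|by case: Ss|].
by apply/(fitz_le_coupling SZ (SZ Ss)) => u Su; exact: monS.
Qed.

Lemma psi_minorant_restr_le_coupling z h : M z -> psi_minorant S h ->
  (h z <= (coupling z)%:E)%E.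
Proof.
move=> /Mfitz [dz Vz hz].
exact: (psi_minorant_le_coupling_NI SZ (algebraically_open_radial aoV) NI Sne dz Vz hz).
Qed.

Lemma psi_restr_le_coupling z : M z -> (psi_hull S z <= (coupling z)%:E)%E.
Proof. by move=> Mz; apply: psi_hull_le => h; exact: psi_minorant_restr_le_coupling. Qed.

Lemma fitz_restr_le_psi z : (fitzpatrick S z <= psi_hull S z)%E.
Proof. by apply: psi_hull_ge; exact: fitz_psi_minorant. Qed.

Lemma coupling_le_psi_restr z : Zsp z -> ((coupling z)%:E <= psi_hull S z)%E.
Proof.
have [T' [T'Z monT' ST' T'c]] := monotone_ext_fitz_ge SZ monS.
by move=> dz; apply: le_trans (T'c z dz) _; apply: psi_hull_ge; exact: fitz_psi_minorant.
Qed.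

Lemma eqc_between (f : X * (X -> R) -> \bar R) :
  (forall z, Zsp z -> V z.1 -> (fitzpatrick S z <= f z <= psi_hull S z)%E) ->
  eqc_on V f = M.
Proof.
move=> hf; apply/seteqP; split => z [dz [Vz hz]].
  by apply/Mfitz; split => //; rewrite -hz; case/andP: (hf z dz Vz).
have /andP [h1 h2] := hf z dz Vz; split => //; split => //.
apply/eqP; rewrite eq_le (le_trans h2 (psi_restr_le_coupling _)) //=.
by rewrite -hz.
Qed.

Lemma eqc_psi_restr : eqc_on V (psi_hull S) = M.
Proof. by apply: eqc_between => z _ _; rewrite fitz_restr_le_psi lexx. Qed.

Lemma eqc_fitz_restr_monotone : monotone_op M.
Proof.
move=> z w /Mfitz [dz Vz hz] /Mfitz [dw Vw hw].
apply: (midpoint_mon_related (fitz_convex SZ)) => //; apply: NI; first exact: Zsp_zcomb.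
exact: cV Vz Vw half_itv01.
Qed.

Lemma eqc_fitz_restr_representable : V_representable V M.
Proof.
split.
  by case: Sne => -[x xs] Ss; exists x; split; [case: Ss|exists xs; exact: restr_sub_eqc_fitz].
exists (psi_hull S); split; [split|split; [exact: psi_hull_convex|split]].
- move=> z dz; apply/negP => /eqP hz; have := coupling_le_psi_restr dz.
  by rewrite hz leeNy_eq.
- case: Sne => s Ss; exists s; split; first exact: SZ.
  by apply: le_lt_trans (psi_restr_le_coupling (restr_sub_eqc_fitz Ss)) _; rewrite ltry.
- exact: psi_hull_lsc.
split; first exact: coupling_le_psi_restr.
by move=> z dz Vz; rewrite -eqc_psi_restr; split => [hz|[[_ [_ ->]] _]].
Qed.

Lemma eqc_fitz_restr_maximal_monotone : maximal_monotone_in V M.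
Proof.
split; first by move=> z [].
split; first by move=> z [_ []].
split; first exact: eqc_fitz_restr_monotone.
move=> z dz Vz rel; apply/Mfitz; split => //.
by apply/(fitz_le_coupling SZ dz) => u Su; apply: rel; exact: restr_sub_eqc_fitz.
Qed.

(* Such an [h] is a minorant of [c + iota_S], hence [h <= psi_S <= c] on [M]. *)
Lemma representative_eqc h : tw_lsc h -> convex_on_Z h ->
  (forall z, Zsp z -> ((coupling z)%:E <= h z)%E) ->
  (forall w, S w -> h w = (coupling w)%:E) -> forall z, M z -> h z = (coupling z)%:E.
Proof.
move=> hl hc hge hS z Mz; have [dz _] := Mz.
apply/eqP; rewrite eq_le hge // andbT; apply: psi_minorant_restr_le_coupling => //.
by apply: psi_minorantP => // w _ Sw; rewrite hS.
Qed.

Lemma representable_ext_eq S' : S' `<=` Zsp -> S' `<=` [set z | V z.1] -> S `<=` S' ->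
  V_representable V S' -> S' = M.
Proof.
move=> S'Z S'V SS' [_ [h [_ [hc [hl [hge hiff]]]]]].
have hS' z : S' z -> h z = (coupling z)%:E.
  by move=> S'z; apply/(hiff z (S'Z _ S'z) (S'V _ S'z)); split => //; exact: S'V.
apply/seteqP; split => z.
  move=> S'z; have dz := S'Z _ S'z; apply/Mfitz; split => //; first exact: S'V.
  apply/(fitz_le_coupling SZ dz) => u Su.
  have du := SZ Su; apply: (midpoint_mon_related hc dz du).
  - by rewrite hS'.
  - by rewrite hS' //; exact: SS'.
  - exact: hge (Zsp_zcomb _ dz du).
move=> Mz; have [dz [Vz _]] := Mz.
have [] := (hiff z dz Vz).1 (representative_eqc hl hc hge (fun w Sw => hS' _ (SS' _ Sw)) Mz).
by [].
Qed.

Lemma maximal_monotone_ext_eq S' : S `<=` S' -> maximal_monotone_in V S' -> S' = M.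
Proof.
move=> SS' [S'Z [S'V [monS' maxS']]].
have S'M : S' `<=` M.
  move=> z S'z; have dz := S'Z _ S'z; apply/Mfitz; split => //; first exact: S'V.
  by apply/(fitz_le_coupling SZ dz) => u Su; apply: monS' => //; exact: SS'.
apply/seteqP; split => // z Mz; have [dz [Vz _]] := Mz.
by apply: maxS' => // w S'w; apply: eqc_fitz_restr_monotone => //; exact: S'M.
Qed.

Let ST : S `<=` T. Proof. by move=> z []. Qed.

Let fitz_le_psi_monotone z : monotone_op T -> (fitzpatrick T z <= psi_hull T z)%E.
Proof. by move=> monT; apply: psi_hull_ge; exact: fitz_psi_minorant. Qed.

Lemma eqc_fitz_monotone : monotone_op T -> eqc_on V (fitzpatrick T) = M.
Proof.
move=> monT; apply: eqc_between => z dz Vz; rewrite fitz_subset_le //=.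
exact: le_trans (fitz_le_psi_monotone z monT) (psi_hull_subset_le z ST).
Qed.

Lemma eqc_psi_monotone : monotone_op T -> eqc_on V (psi_hull T) = M.
Proof.
move=> monT; apply: eqc_between => z dz Vz; rewrite psi_hull_subset_le //= andbT.
exact: le_trans (fitz_subset_le z ST) (fitz_le_psi_monotone z monT).
Qed.

Lemma representable_identifies : V_representable V T -> identifies V T /\ M = S.
Proof.
move=> [_ [h [_ [hc [hl [hge hiff]]]]]].
have hS w : S w -> h w = (coupling w)%:E by move=> Sw; apply/hiff => //; [exact: SZ|case: Sw].
have MS : M `<=` S.
  by move=> z Mz; have [dz [Vz _]] := Mz; exact/(hiff z dz Vz)/(representative_eqc hl hc hge hS).
split; last by apply/seteqP; split => //; exact: restr_sub_eqc_fitz.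
by move=> z dz Vz hz; have /MS [] : M z by apply/Mfitz.
Qed.

End Theorem34.

Theorem theorem3p4 (R : realType) (X : tvsType R)
  (T : set (X * (X -> R))) (V : set X) :
  hausdorff_space X -> (exists x : X, x != 0) ->
  T `<=` Zsp ->
  V !=set0 -> algebraically_open V -> convex_subset V ->
  nonvoid_op (restr_op T V) -> monotone_op (restr_op T V) -> V_NI V T ->
  let M := eqc_on V (fitzpatrick (restr_op T V)) in
  eqc_on V (psi_hull (restr_op T V)) = M /\
      lec_on V (fitzpatrick (restr_op T V)) = M /\
      (* the unique V-representable extension of T|_V in V x X^* *)
      (restr_op T V `<=` M /\ V_representable V M /\
       forall S, S `<=` Zsp -> S `<=` [set z | V z.1] -> restr_op T V `<=` S ->
         V_representable V S -> S = M) /\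
      (* the unique maximal monotone_op extension of T|_V in V x X^* *)
      (restr_op T V `<=` M /\ maximal_monotone_in V M /\
       forall S, restr_op T V `<=` S -> maximal_monotone_in V S -> S = M) /\
      (nonvoid_op T -> monotone_op T ->
         eqc_on V (fitzpatrick T) = M /\ eqc_on V (psi_hull T) = M) /\
      (nonvoid_op T -> monotone_op T -> V_representable V T ->
         identifies V T /\ M = restr_op T V).
Proof.
move=> _ _ TZ _ aoV cV Sne monS NI M.
have SM : restr_op T V `<=` M by apply: restr_sub_eqc_fitz.
split; first by apply: eqc_psi_restr.
split; first by apply: lec_fitz_restr.
split.
  split=> //; split; first by apply: eqc_fitz_restr_representable.
  by move=> S; apply: representable_ext_eq.
split.
  split=> //; split; first by apply: eqc_fitz_restr_maximal_monotone.
  by move=> S; apply: maximal_monotone_ext_eq.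
split; first by move=> _ monT; split; [apply: eqc_fitz_monotone|apply: eqc_psi_monotone].
by move=> _ _; apply: representable_identifies.
Qed.
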